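(* Let $\mathcal U$ be an ultrafilter on a set $I$ and let $(M_i)_{i\in I}$ be a family of pointed metric spaces. Define $T\colon (\mathrm{Lip}_0(M_i))_{\mathcal U}\rightarrow \mathrm{Lip}_0((M_i)_{\mathcal U})$ by \[ T\big((f_i)_{\mathcal U}\big)\big((x_i)_{\mathcal U}\big)=\lim_{\mathcal U,i} f_i(x_i). \] Then $T$ is a well-defined linear operator with $\|T\|\leq 1$, and $T\big(B_{(\mathrm{Lip}_0(M_i))_{\mathcal U}}\big)$ is a $1$-norming set for $\mathcal F((M_i)_{\mathcal U})$ (where $\mathrm{Lip}_0((M_i)_{\mathcal U})$ is identified with $\mathcal F((M_i)_{\mathcal U})^*$).
   Context: Ultraproduct of metric spaces: given a set $I$, an ultrafilter $\mathcal U$ on $I$ and metric spaces $(M_i,d_i)$ with distinguished points $0_i\in M_i$, let $\ell_\infty(M_i)=\{(x_i)_{i\in I}\in\prod_i M_i:\sup_i d_i(x_i,0_i)<\infty\}$ with pseudometric $d((x_i),(y_i))=\lim_{\mathcal U,i}d_i(x_i,y_i)$. The ultraproduct $(M_i)_{\mathcal U}$ is the metric quotient of $\ell_\infty(M_i)$ identifying points at distance $0$; the class of $(x_i)_{i\in I}$ is written $(x_i)_{\mathcal U}$, and $(M_i)_{\mathcal U}$ is pointed by $(0_i)_{\mathcal U}$. For normed spaces the distinguished point is $0$, and this gives the usual Banach space ultraproduct with norm $\|(x_i)_{\mathcal U}\|=\lim_{\mathcal U}\|x_i\|$. For a pointed metric space $M$ (base point $0$), $\mathrm{Lip}_0(M)$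 is the Banach space of real-valued Lipschitz functions on $M$ vanishing at $0$, normed by the Lipschitz constant; $\delta(x)\in\mathrm{Lip}_0(M)^*$ is evaluation at $x$; the Lipschitz-free space is $\mathcal F(M)=\overline{\mathrm{span}}\{\delta(x):x\in M\}\subset \mathrm{Lip}_0(M)^*$, and $\mathcal F(M)^*=\mathrm{Lip}_0(M)$. A set $A\subset X^*$ is $\lambda$-norming for a Banach space $X$ if $\sup_{x^*\in A\cap B_{X^*}}|x^*(x)|\geq \frac1\lambda\|x\|$ for all $x\in X$. *)

From HB Require Import structures.
From mathcomp Require Import all_boot all_order all_algebra.
From mathcomp Require Import boolp classical_sets reals.
Set Implicit Arguments. Unset Strict Implicit. Unset Printing Implicit Defensive.
Import Order.TTheory GRing.Theory Num.Theory.
Local Open Scope ring_scope.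
Local Open Scope classical_set_scope.

Record pmet (R : realType) := PMet {
  pt :> Type;
  dist : pt -> pt -> R;
  base : pt;
  dist_eq0 : forall x y, dist x y = 0 <-> x = y;
  distC : forall x y, dist x y = dist y x;
  dist_tri : forall x y z, dist x z <= dist x y + dist y z }.

Definition is_ultrafilter (I : Type) (U : set (set I)) : Prop :=
  [/\ U setT, ~ U set0,
      (forall A B, U A -> U B -> U (A `&` B)),
      (forall A B, A `<=` B -> U A -> U B) &
      (forall A, U A \/ U (~` A))].

Definition is_ulim (R : realType) (I : Type) (U : set (set I)) (a : I -> R) (L : R) :=
  forall e : R, 0 < e -> U [set i | `|a i - L| < e].

(** The U-limit [lim_{U,i} a_i] (exists and is unique for bounded a). *)
Definition ulim (R : realType) (I : Type) (U : set (set I)) (a : I -> R) : R :=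
  xget 0 [set L | is_ulim U a L].

Definition lipschitz (R : realType) (X : Type) (d : X -> X -> R) (f : X -> R) :=
  exists L : R, forall x y, `|f x - f y| <= L * d x y.

Definition lipnorm (R : realType) (X : Type) (d : X -> X -> R) (f : X -> R) : R :=
  inf [set L : R | 0 <= L /\ forall x y, `|f x - f y| <= L * d x y].

Definition Lip0 (R : realType) (X : Type) (d : X -> X -> R) (x0 : X) (f : X -> R) :=
  lipschitz d f /\ f x0 = 0.

Definition lipball (R : realType) (X : Type) (d : X -> X -> R) (x0 : X) : set (X -> R) :=
  [set g | Lip0 d x0 g /\ lipnorm d g <= 1].

(** Elements of the Lipschitz-free space F(X) ⊂ Lip_0(X)^*: functionals on
    Lip_0(X) (given as maps (X -> R) -> R, only their values on Lip_0(X)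
    matter) which are linear on Lip_0(X) and belong to the norm-closure of
    span{δ(x) : x ∈ X} in Lip_0(X)^*. *)
Definition in_free (R : realType) (X : Type) (d : X -> X -> R) (x0 : X)
  (mu : (X -> R) -> R) : Prop :=
  (forall (a : R) g h, Lip0 d x0 g -> Lip0 d x0 h ->
     mu (fun x => a * g x + h x) = a * mu g + mu h) /\
  (forall e : R, 0 < e -> exists s : seq (R * X),
     forall g, lipball d x0 g -> `|mu g - \sum_(p <- s) p.1 * g p.2| <= e).

Definition dualnorm (R : realType) (X : Type) (d : X -> X -> R) (x0 : X)
  (mu : (X -> R) -> R) : R :=
  sup [set `|mu g| | g in lipball d x0].

(** Elements of ℓ_∞(M_i): bounded families (x_i). *)
Definition upt (R : realType) (I : Type) (M : I -> pmet R) : Type :=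
  {x : forall i, M i | exists C : R, forall i, dist (x i) (base (M i)) <= C}.

Lemma ubase_bounded (R : realType) (I : Type) (M : I -> pmet R) :
  exists C : R, forall i, dist (base (M i)) (base (M i)) <= C.
Proof. by exists 0 => i; rewrite (proj2 (dist_eq0 _ _) erefl). Qed.

Definition ubase (R : realType) (I : Type) (M : I -> pmet R) : upt M :=
  exist _ (fun i => base (M i)) (ubase_bounded M).

(** The ultraproduct (M_i)_U is the metric quotient of (upt M, udist U M);
    a Lipschitz function on (M_i)_U is the same as a Lipschitz function on
    this pseudometric space (they are constant on classes). *)
Definition udist (R : realType) (I : Type) (U : set (set I)) (M : I -> pmet R)
  (x y : upt M) : R :=
  ulim U (fun i => dist (sval x i) (sval y i)).

(** Representatives of elements of the ultraproduct (Lip_0(M_i))_U: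
    families (f_i) with f_i ∈ Lip_0(M_i) and sup_i ‖f_i‖ < ∞. *)
Definition lipfam (R : realType) (I : Type) (M : I -> pmet R)
  (f : forall i, M i -> R) : Prop :=
  (forall i, Lip0 (@dist R (M i)) (base (M i)) (f i)) /\
  exists C : R, forall i, lipnorm (@dist R (M i)) (f i) <= C.

Definition ufnorm (R : realType) (I : Type) (U : set (set I)) (M : I -> pmet R)
  (f : forall i, M i -> R) : R :=
  ulim U (fun i => lipnorm (@dist R (M i)) (f i)).

Definition Top (R : realType) (I : Type) (U : set (set I)) (M : I -> pmet R)
  (f : forall i, M i -> R) : upt M -> R :=
  fun x => ulim U (fun i => f i (sval x i)).

From Pilot Require Import Defs.
From HB Require Import structures.
From mathcomp Require Import all_boot all_order all_algebra.
From mathcomp Require Import boolp classical_sets reals filter topology normedtype.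
From mathcomp Require Import ring lra.
Import Order.TTheory GRing.Theory Num.Theory numFieldNormedType.Exports.
Local Open Scope ring_scope.
Local Open Scope classical_set_scope.

(* Along an ultrafilter every bounded real family converges (its image is an
   ultrafilter on a compact interval), and these limits commute with sums,
   products, |.|, min and preserve <=.  Well-definedness, linearity and
   ||T|| <= 1 are thus the coordinatewise Lipschitz estimates passed to the limit.
   For the norming property take g in the unit ball of Lip_0((M_i)_U) and a
   finitely supported functional approximating mu on that ball up to e.  The
   McShane formula y |-> min(d(y,0), min_z g(z) + d(y,z)), z ranging over the
   finite support, makes sense in each M_i and defines there 1-Lipschitz
   functions; by continuity of the formula their image under T is the McShane
   extension of g from the support, which agrees with g there.  Hence mu(g) is
   e-close to mu at an element of T(B), the image of the unit ball. *)

Lemma is_ultrafilter_ultra {T : Type} {F : set_system T} :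
  is_ultrafilter F -> UltraFilter F.
Proof.
case=> FT F0 FI FS FC; have FP : ProperFilter F by split=> //; split.
split=> // G [G0 GF] FG; apply/seteqP; split=> // A GA.
case: (FC A) => // /FG GnA.
by case: G0; rewrite -(setICr A); exact: filterI.
Qed.

Lemma is_ultrafilter_fmap {T S : Type} {F : set_system T} (f : T -> S) :
  is_ultrafilter F -> is_ultrafilter (f @ F).
Proof.
case=> FT F0 FI FS FC; split=> // [A B|A B AB|A]; first exact: FI; last exact: FC.
by apply: FS => t /AB.
Qed.

Lemma cvg_min {R : realType} {T : Type} {F : set_system T} {FF : Filter F}
    (a b : T -> R) (l m : R) :
  a @ F --> l -> b @ F --> m -> (fun t => Num.min (a t) (b t)) @ F --> Num.min l m.
Proof. by apply: continuous2_cvg; apply: (@min_continuous _ R (l, m)). Qed.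

Lemma le_cvg_to {R : realFieldType} {T : Type} {F : set_system T} {FF : ProperFilter F}
    {f g : T -> R} {l l' : R} :
  f @ F --> l -> g @ F --> l' -> (\forall t \near F, f t <= g t) -> l <= l'.
Proof.
move=> fl gl fg; rewrite -subr_ge0; apply: cvgr_to_ge (cvgB gl fl) _.
by apply: filterS fg => t; rewrite /= subr_ge0.
Qed.

Section Ultralimit.
Context {R : realType} {I : Type} {U : set_system I}.
Hypothesis HU : is_ultrafilter U.
Let U_ultra := is_ultrafilter_ultra HU.
#[local] Existing Instance U_ultra.

Lemma is_ulimP (a : I -> R) (l : R) : is_ulim U a l <-> a @ U --> l.
Proof.
by rewrite cvgrPdist_lt; split=> al e /al; apply: filterS => i /=; rewrite distrC.
Qed.

Lemma ulim_eq {a : I -> R} {l : R} : a @ U --> l -> ulim U a = l.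
Proof.
move=> al; apply: xget_unique => [|m /is_ulimP am]; first exact/is_ulimP.
exact: (cvg_unique _ am al).
Qed.

Lemma ulim_cvg (a : I -> R) (C : R) : (forall i, `|a i| <= C) -> a @ U --> ulim U a.
Proof.
move=> aC; have aU := is_ultrafilter_ultra (is_ultrafilter_fmap a HU).
have : compact `[- C, C] by exact: segment_compact.
rewrite compact_ultra => /(_ _ aU)[|l [_ al]]; last by rewrite (ulim_eq al).
by apply: (@filterE _ U) => i /=; rewrite in_itv /= -ler_norml.
Qed.

End Ultralimit.

Section LipschitzConstant.
Context {R : realType} {X : Type} {d : X -> X -> R}.
Hypothesis d_ge0 : forall x y, 0 <= d x y.

(* [Defs.lipschitz] is qualified because normedtype also defines a notation
   [lipschitz]. *)

Let lipschitz_consts_neq0 (f : X -> R) : Defs.lipschitz d f ->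
  [set L : R | 0 <= L /\ forall x y : X, `|f x - f y| <= L * d x y] !=set0.
Proof.
move=> [L fL]; exists `|L|; split=> // x y.
by apply: le_trans (fL x y) _; rewrite ler_wpM2r // ler_norm.
Qed.

Lemma lipnorm_ge0 {f : X -> R} : Defs.lipschitz d f -> 0 <= lipnorm d f.
Proof. by move=> /lipschitz_consts_neq0 fL; apply: lb_le_inf fL _ => L []. Qed.

Lemma lipnorm_le (f : X -> R) (L : R) :
  0 <= L -> (forall x y, `|f x - f y| <= L * d x y) -> lipnorm d f <= L.
Proof. by move=> L0 fL; apply: ge_inf; [exists 0 => K []|split]. Qed.

Lemma lipschitz_lipnorm {f : X -> R} : Defs.lipschitz d f ->
  forall x y, `|f x - f y| <= lipnorm d f * d x y.
Proof.
move=> /lipschitz_consts_neq0 fL x y; have [L [_ HL]] := fL.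
have [dxy0|dxy_gt0] := eqVneq (d x y) 0.
  by have := HL x y; rewrite dxy0 !mulr0.
have {dxy_gt0}dxy_gt0 : 0 < d x y by rewrite lt_def dxy_gt0 d_ge0.
rewrite -ler_pdivrMr //; apply: lb_le_inf fL _ => K [_ HK].
by rewrite ler_pdivrMr.
Qed.

Lemma lipball0 (x0 : X) : lipball d x0 (fun=> 0).
Proof.
split; first by split=> //; exists 0 => x y; rewrite subrr normr0 mul0r.
by apply: lipnorm_le => // x y; rewrite subrr normr0 mul1r.
Qed.

Lemma lipball_lipschitz {x0 : X} {h : X -> R} : lipball d x0 h ->
  forall x y, `|h x - h y| <= d x y.
Proof.
move=> [[hL _] h1] x y; apply: le_trans (lipschitz_lipnorm hL x y) _.
by rewrite -[leRHS]mul1r ler_wpM2r.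
Qed.

Lemma in_free_bounded {x0 : X} {mu : (X -> R) -> R} : in_free d x0 mu ->
  exists B, forall h, lipball d x0 h -> `|mu h| <= B.
Proof.
move=> [_ /(_ 1 ltr01) [s Hs]].
exists (1 + \sum_(p <- s) `|p.1| * d p.2 x0) => h hB.
have hs : `|\sum_(p <- s) p.1 * h p.2| <= \sum_(p <- s) `|p.1| * d p.2 x0.
  apply: le_trans (ler_norm_sum _ _ _) (ler_sum _ _) => p _.
  rewrite normrM ler_wpM2l //; have := lipball_lipschitz hB p.2 x0.
  by case: hB => -[_ ->]; rewrite subr0.
have := ler_distD (\sum_(p <- s) p.1 * h p.2) (mu h) 0.
by rewrite !subr0; have := Hs h hB; lra.
Qed.

End LipschitzConstant.

Section PointedMetric.
Context {R : realType} (M : pmet R).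
Implicit Types x y z : M.

Lemma dist_xx x : dist x x = 0.
Proof. exact/dist_eq0. Qed.

Lemma dist_ge0 x y : 0 <= dist x y.
Proof. by have := dist_tri x y x; rewrite dist_xx (distC y x); lra. Qed.

Lemma dist_lipschitz x y z : `|dist x z - dist y z| <= dist x y.
Proof.
rewrite ler_norml; have := dist_tri x y z; have := dist_tri y x z.
by rewrite (distC y x) => *; apply/andP; split; lra.
Qed.

End PointedMetric.

Lemma ler_dist_min {R : realDomainType} (a b a' b' : R) :
  `|Num.min a b - Num.min a' b'| <= Num.max `|a - a'| `|b - b'|.
Proof.
set e := Num.max _ _.
have : `|b - b'| <= e by rewrite le_max lexx orbT.
have : `|a - a'| <= e by rewrite le_max lexx.
rewrite !ler_norml.
by move=> /andP[? ?] /andP[? ?]; case: (leP a b); case: (leP a' b') => *; lra.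
Qed.

Lemma eq_big_In {R : Type} {idx : R} {op : R -> R -> R} {T : Type} (s : seq T)
    (F G : T -> R) :
  (forall x, List.In x s -> F x = G x) ->
  \big[op/idx]_(x <- s) F x = \big[op/idx]_(x <- s) G x.
Proof.
elim: s => [|x s IH] FG; first by rewrite !big_nil.
by rewrite !big_cons FG /=; [rewrite IH // => y sy; apply: FG; right|left].
Qed.

(* The McShane extension of [g] from the finite set {x0} ∪ pt(zs), with value 0
   at [x0]; [pt] places the indices [zs] as points of [X]. *)
Definition mcshane {R : realType} {X Z : Type} (d : X -> X -> R) (x0 : X)
    (pt : Z -> X) (g : Z -> R) (zs : seq Z) (y : X) : R :=
  foldr (fun z m => Num.min (g z + d y (pt z)) m) (d y x0) zs.

Section McShane.
Context {R : realType} {X : Type} {d : X -> X -> R} {x0 : X}.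

Lemma mcshane_le_base {Z : Type} (pt : Z -> X) (g : Z -> R) zs y :
  mcshane d x0 pt g zs y <= d y x0.
Proof. by elim: zs => [|z zs IH] //=; rewrite ge_min IH orbT. Qed.

Lemma mcshane_le {Z : Type} (pt : Z -> X) (g : Z -> R) {zs z} y :
  List.In z zs -> mcshane d x0 pt g zs y <= g z + d y (pt z).
Proof.
elim: zs => [|z' zs IH] //= [<-|/IH zsz]; first by rewrite ge_min lexx.
by rewrite ge_min zsz orbT.
Qed.

Lemma mcshane_ge {g : X -> R} zs y :
  (forall x x', `|g x - g x'| <= d x x') -> g x0 = 0 -> g y <= mcshane d x0 id g zs y.
Proof.
move=> gL g0; elim: zs => [|z zs IH] /=.
  by have := gL y x0; rewrite g0 subr0; apply: le_trans; exact: ler_norm.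
by rewrite le_min IH andbT -lerBlDl; apply: le_trans (ler_norm _) (gL y z).
Qed.

Lemma mcshane_id {g : X -> R} {zs z} :
  (forall x x', `|g x - g x'| <= d x x') -> g x0 = 0 -> d z z = 0 ->
  z = x0 \/ List.In z zs -> mcshane d x0 id g zs z = g z.
Proof.
move=> gL g0 dzz zs_z; apply/eqP; rewrite eq_le mcshane_ge // andbT.
case: zs_z => [zx0|zsz]; last by have := mcshane_le id g z zsz; rewrite dzz addr0.
by subst z; have := mcshane_le_base id g zs x0; rewrite dzz g0.
Qed.

End McShane.

Lemma mcshane_lipschitz {R : realType} {M : pmet R} (x0 : M) {Z : Type}
    (pt : Z -> M) (g : Z -> R) zs (y y' : M) :
  `|mcshane (@dist R M) x0 pt g zs y - mcshane (@dist R M) x0 pt g zs y'| <= dist y y'.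
Proof.
elim: zs => [|z zs IH] /=; first exact: dist_lipschitz.
apply: le_trans (ler_dist_min _ _ _ _) _; rewrite ge_max IH andbT.
by rewrite opprD addrACA subrr add0r dist_lipschitz.
Qed.

Section Ultraproduct.
Context {R : realType} {I : Type} {U : set_system I} {M : I -> pmet R}.
Hypothesis HU : is_ultrafilter U.
Let U_ultra := is_ultrafilter_ultra HU.
#[local] Existing Instance U_ultra.
Local Notation d := (udist U (M:=M)).
Local Notation dist_ i := (@dist R (M i)).
Implicit Types (x y z : upt M) (f g : forall i, M i -> R) (h : upt M -> R)
  (zs : seq (upt M)).

Lemma udist_cvg x y : (fun i => dist (sval x i) (sval y i)) @ U --> d x y.
Proof.
have [Cx Hx] := svalP x; have [Cy Hy] := svalP y.
apply: (ulim_cvg HU _ (Cx + Cy)) => i; rewrite ger0_norm ?dist_ge0 //.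
have := dist_tri (sval x i) (base (M i)) (sval y i).
by rewrite (distC (base (M i))); have := Hx i; have := Hy i; lra.
Qed.

Lemma udist_ge0 x y : 0 <= d x y.
Proof.
by apply: cvgr_to_ge (udist_cvg x y) _; apply: filterE => i; exact: dist_ge0.
Qed.

Lemma udist_xx x : d x x = 0.
Proof.
by apply: (ulim_eq HU); apply: cvg_near_cst; apply: filterE => i; exact: dist_xx.
Qed.

Lemma lipfam_lipschitz {f i} (a b : M i) : lipfam f ->
  `|f i a - f i b| <= lipnorm (dist_ i) (f i) * dist a b.
Proof. by case=> /(_ i) [fL _] _; exact: (lipschitz_lipnorm (@dist_ge0 _ (M i)) fL). Qed.

Lemma lipfam_lipnorm_ge0 {f} i : lipfam f -> 0 <= lipnorm (dist_ i) (f i).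
Proof. by case=> /(_ i) [fL _] _; exact: (lipnorm_ge0 (@dist_ge0 _ (M i)) fL). Qed.

Lemma ufnorm_cvg {f} : lipfam f ->
  (fun i => lipnorm (dist_ i) (f i)) @ U --> ufnorm U f.
Proof.
move=> fF; have [_ [C fC]] := fF; apply: (ulim_cvg HU _ C) => i.
by rewrite ger0_norm ?fC // lipfam_lipnorm_ge0.
Qed.

Lemma ufnorm_ge0 {f} : lipfam f -> 0 <= ufnorm U f.
Proof.
move=> fF; apply: cvgr_to_ge (ufnorm_cvg fF) _.
by apply: filterE => i; exact: lipfam_lipnorm_ge0.
Qed.

Lemma Top_cvg {f} x : lipfam f -> (fun i => f i (sval x i)) @ U --> Top U f x.
Proof.
move=> fF; have [Cx Hx] := svalP x; have [f0 [C fC]] := fF.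
apply: (ulim_cvg HU _ (C * Cx)) => i.
have := lipfam_lipschitz (sval x i) (base (M i)) fF; rewrite (f0 i).2 subr0.
move/le_trans; apply; apply: ler_pM => //; [exact: lipfam_lipnorm_ge0|exact: dist_ge0].
Qed.

Lemma Top_lipschitz {f} x y : lipfam f ->
  `|Top U f x - Top U f y| <= ufnorm U f * d x y.
Proof.
move=> fF; apply: le_cvg_to (cvg_norm (cvgB (Top_cvg x fF) (Top_cvg y fF)))
  (cvgM (ufnorm_cvg fF) (udist_cvg x y)) _.
by apply: filterE => i; exact: lipfam_lipschitz.
Qed.

Lemma Top_ubase {f} : lipfam f -> Top U f (ubase M) = 0.
Proof.
move=> [f0 _]; apply: (ulim_eq HU); apply: cvg_near_cst.
by apply: filterE => i; exact: (f0 i).2.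
Qed.

Lemma Top_Lip0 {f} : lipfam f -> Lip0 d (ubase M) (Top U f).
Proof.
by move=> fF; split; [exists (ufnorm U f) => x y; exact: Top_lipschitz|exact: Top_ubase].
Qed.

Lemma lipnorm_Top {f} : lipfam f -> lipnorm d (Top U f) <= ufnorm U f.
Proof.
by move=> fF; apply: lipnorm_le; [exact: ufnorm_ge0|move=> x y; exact: Top_lipschitz].
Qed.

Lemma Top_udist0 {f} x y : lipfam f -> d x y = 0 -> Top U f x = Top U f y.
Proof.
move=> fF dxy0; apply/eqP; rewrite -subr_eq0 -normr_le0.
by have := Top_lipschitz x y fF; rewrite dxy0 mulr0.
Qed.

Lemma TopDZ (a : R) {f g} : lipfam f -> lipfam g ->
  Top U (fun i p => a * f i p + g i p) = (fun p => a * Top U f p + Top U g p).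
Proof.
move=> fF gF; apply/funext => x; apply: (ulim_eq HU).
exact: cvgD (cvgZ (cvg_cst a) (Top_cvg x fF)) (Top_cvg x gF).
Qed.

Lemma lipfamB {f g} : lipfam f -> lipfam g -> lipfam (fun i p => f i p - g i p).
Proof.
move=> fF gF; have [f0 [Cf fC]] := fF; have [g0 [Cg gC]] := gF.
pose L i := lipnorm (dist_ i) (f i) + lipnorm (dist_ i) (g i).
have fgL i (a b : M i) : `|(f i a - g i a) - (f i b - g i b)| <= L i * dist a b.
  have -> : f i a - g i a - (f i b - g i b) = f i a - f i b - (g i a - g i b).
    by ring.
  rewrite mulrDl; apply: le_trans (ler_normB _ _) _.
  exact: lerD (lipfam_lipschitz _ _ fF) (lipfam_lipschitz _ _ gF).
have L0 i : 0 <= L i by rewrite addr_ge0 ?lipfam_lipnorm_ge0.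
split=> [i|]; first by split; [exists (L i)|rewrite (f0 i).2 (g0 i).2 subrr].
exists (Cf + Cg) => i; apply: le_trans (lerD (fC i) (gC i)).
by apply: lipnorm_le; [exact: L0|exact: fgL].
Qed.

Lemma eq_Top_ufnormB0 {f g} : lipfam f -> lipfam g ->
  ufnorm U (fun i p => f i p - g i p) = 0 -> Top U f = Top U g.
Proof.
move=> fF gF fg0; apply/funext => x; apply/eqP; rewrite -subr_eq0 -normr_le0.
have fgF := lipfamB fF gF; have := Top_lipschitz x (ubase M) fgF.
have -> : Top U (fun i p => f i p - g i p) x = Top U f x - Top U g x.
  by apply: (ulim_eq HU); exact: cvgB (Top_cvg x fF) (Top_cvg x gF).
by rewrite fg0 mul0r Top_ubase // subr0.
Qed.

Definition mcshane_fam h zs : forall i, M i -> R :=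
  fun i a => mcshane (dist_ i) (base (M i)) (fun z => sval z i) h zs a
           - mcshane (dist_ i) (base (M i)) (fun z => sval z i) h zs (base (M i)).

Lemma mcshane_fam_lipschitz h zs i (a b : M i) :
  `|mcshane_fam h zs i a - mcshane_fam h zs i b| <= dist a b.
Proof. by rewrite /mcshane_fam opprB addrA subrK; exact: mcshane_lipschitz. Qed.

Lemma lipnorm_mcshane_fam h zs i : lipnorm (dist_ i) (mcshane_fam h zs i) <= 1.
Proof. by apply: lipnorm_le => // a b; rewrite mul1r mcshane_fam_lipschitz. Qed.

Lemma lipfam_mcshane_fam h zs : lipfam (mcshane_fam h zs).
Proof.
split=> [i|]; last by exists 1; exact: lipnorm_mcshane_fam.
split; last by rewrite /mcshane_fam subrr.
by exists 1 => a b; rewrite mul1r mcshane_fam_lipschitz.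
Qed.

Lemma ufnorm_mcshane_fam h zs : ufnorm U (mcshane_fam h zs) <= 1.
Proof.
apply: cvgr_to_le (ufnorm_cvg (lipfam_mcshane_fam h zs)) _.
by apply: filterE => i; exact: lipnorm_mcshane_fam.
Qed.

Lemma mcshane_cvg h zs y :
  (fun i => mcshane (dist_ i) (base (M i)) (fun z => sval z i) h zs (sval y i)) @ U -->
  mcshane d (ubase M) id h zs y.
Proof.
elim: zs => [|z zs IH] /=; first exact: udist_cvg.
exact: cvg_min (cvgD (cvg_cst _) (udist_cvg y z)) IH.
Qed.

Lemma Top_mcshane_fam h zs z : lipball d (ubase M) h -> List.In z zs ->
  Top U (mcshane_fam h zs) z = h z.
Proof.
move=> hB zsz; have hL := lipball_lipschitz udist_ge0 hB.
have h0 : h (ubase M) = 0 by case: hB => -[_ ->].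
have -> : h z = mcshane d (ubase M) id h zs z - mcshane d (ubase M) id h zs (ubase M).
  rewrite (mcshane_id hL h0 (udist_xx z) (or_intror zsz)).
  by rewrite (mcshane_id hL h0 (udist_xx _) (or_introl erefl)) h0 subr0.
by apply: (ulim_eq HU); exact: cvgB (mcshane_cvg h zs z) (mcshane_cvg h zs (ubase M)).
Qed.

Lemma Top_ball_norming mu : in_free d (ubase M) mu ->
  dualnorm d (ubase M) mu <=
  sup [set `|mu h| | h in
         [set Top U f | f in [set f : forall i, M i -> R | lipfam f /\ ufnorm U f <= 1]]
         `&` lipball d (ubase M)].
Proof.
move=> muF; set TB := _ `&` _; set S := (X in _ <= sup X).
have TB_mcshane h zs : TB (Top U (mcshane_fam h zs)).
  have hF := lipfam_mcshane_fam h zs; have hU := ufnorm_mcshane_fam h zs.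
  split; first by exists (mcshane_fam h zs).
  by split; [exact: Top_Lip0|exact: le_trans (lipnorm_Top hF) hU].
have [B muB] := in_free_bounded udist_ge0 muF.
have S_sup : has_sup S.
  pose h0 := Top U (mcshane_fam (fun=> 0) [::]).
  split; first by exists `|mu h0|; exists h0 => //; exact: TB_mcshane.
  by exists B => _ [h [_ hB] <-]; exact: muB.
apply: ge_sup.
  by exists `|mu (fun=> 0)|; exists (fun=> 0) => //; apply: lipball0; exact: udist_ge0.
move=> _ [g gB <-]; apply/ler_addgt0Pr => e e0.
have [s mus] := muF.2 (e / 2) (divr_gt0 e0 (ltr0Sn _ 1)).
set Tg := Top U (mcshane_fam g [seq p.2 | p <- s]).
have Tg_g : \sum_(p <- s) p.1 * Tg p.2 = \sum_(p <- s) p.1 * g p.2.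
  by apply: eq_big_In => p sp; rewrite /Tg Top_mcshane_fam //; exact: List.in_map.
have := sup_upper_bound S_sup (ex_intro2 _ _ Tg (TB_mcshane _ _) erefl).
have := mus g gB; have := mus Tg (TB_mcshane _ _).2; rewrite Tg_g.
set Sg := \sum_(p <- s) _.
have := ler_distD (mu Tg) (mu g) 0; have := ler_distD Sg (mu g) (mu Tg).
by rewrite !subr0 (distrC Sg); lra.
Qed.

End Ultraproduct.

Theorem theorem3p1 (R : realType) (I : Type) (U : set (set I)) (M : I -> pmet R) :
  is_ultrafilter U ->
  (* well-defined: the U-limit exists ... *)
  (forall f : forall i, M i -> R, lipfam f -> forall x : upt M,
      is_ulim U (fun i => f i (sval x i)) (Top U f x)) /\
  (* ... does not depend on the representative of (x_i)_U ... *)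
  (forall f : forall i, M i -> R, lipfam f -> forall x y : upt M,
      udist U x y = 0 -> Top U f x = Top U f y) /\
  (* ... nor on the representative of (f_i)_U ... *)
  (forall f g : forall i, M i -> R, lipfam f -> lipfam g ->
      ufnorm U (fun i x => f i x - g i x) = 0 -> Top U f = Top U g) /\
  (* ... and T((f_i)_U) ∈ Lip_0((M_i)_U) *)
  (forall f : forall i, M i -> R, lipfam f -> Lip0 (udist U (M:=M)) (ubase M) (Top U f)) /\
  (* linearity *)
  (forall (a : R) (f g : forall i, M i -> R), lipfam f -> lipfam g ->
      Top U (fun i x => a * f i x + g i x) = (fun x => a * Top U f x + Top U g x)) /\
  (* ‖T‖ ≤ 1 *)
  (forall f : forall i, M i -> R, lipfam f -> lipnorm (udist U (M:=M)) (Top U f) <= ufnorm U f) /\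
  (* T(B_{(Lip_0(M_i))_U}) is 1-norming for F((M_i)_U) *)
  (forall mu, in_free (udist U (M:=M)) (ubase M) mu ->
      dualnorm (udist U (M:=M)) (ubase M) mu <=
      sup [set `|mu h| | h in
             [set Top U f | f in [set f : forall i, M i -> R | lipfam f /\ ufnorm U f <= 1]]
             `&` lipball (udist U (M:=M)) (ubase M)]).
Proof.
move=> HU; split; first by move=> f fF x; apply/(is_ulimP HU); exact: Top_cvg.
split; first by move=> f fF x y; exact: Top_udist0.
split; first by move=> f g fF gF; exact: eq_Top_ufnormB0.
split; first by move=> f fF; exact: Top_Lip0.
split; first by move=> a f g fF gF; exact: TopDZ.
split; first by move=> f fF; exact: lipnorm_Top.
by move=> mu; exact: Top_ball_norming.
Qed.
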